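(* Let $k\geq 2$ be an integer and let $\gamma\geq 0$ be a real number. For finite sets $X$ and functions $f:X\to X$, write $f^k$ for the $k$-fold iterate of $f$. Then, as $n\to\infty$, \[\max_{\substack{f:X\to X\\ |X|=n}}\frac{\deg(f^k)}{\deg(f)^\gamma}\geq \frac{1+o(1)}{(k+1)^\gamma}\,n^{1-1/2^{k-1}}.\] Moreover, if $\gamma\geq 2-1/2^{k-1}$, then for every $n\geq 1$, \[\max_{\substack{f:X\to X\\ |X|=n}}\frac{\deg(f^k)}{\deg(f)^{\gamma}}\leq n^{1-1/2^{k-1}}.\]
   Context: For finite sets $X,Y$ and a function $f:X\to Y$, the degree (of noninjectivity/noninvertibility) of $f$ is $\deg(f)=\frac{1}{|X|}\sum_{x\in X}|f^{-1}(f(x))|=\frac{1}{|X|}\sum_{y\in Y}|f^{-1}(y)|^2$. The maxima range over all $n$-element sets $X$ and all functions $f:X\to X$. *)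

From HB Require Import structures.
From mathcomp Require Import all_boot all_order all_algebra.
From mathcomp Require Import reals exp.
Set Implicit Arguments. Unset Strict Implicit. Unset Printing Implicit Defensive.
Import Order.TTheory GRing.Theory Num.Theory.
Local Open Scope ring_scope.

Definition fdeg (R : realType) (T : finType) (f : T -> T) : R :=
  (\sum_(x : T) (#|[set y | f y == f x]|)%:R) / (#|T|)%:R.

Definition fratio (R : realType) (T : finType) (k : nat) (gamma : R)
  (f : T -> T) : R :=
  fdeg R (iter k f) / powR (fdeg R f) gamma.

Definition maxratio (R : realType) (n k : nat) (gamma : R) : R :=
  \big[Num.max/0]_(f : {ffun 'I_n -> 'I_n}) fratio k gamma (fun x => f x).

Definition expo (R : realType) (k : nat) : R := 1 - (2 ^+ k.-1)^-1.

From HB Require Import structures.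
From mathcomp Require Import all_boot all_order all_algebra.
From mathcomp Require Import reals exp.
From mathcomp Require Import zify ring lra.
Import Order.TTheory GRing.Theory Num.Theory.
Set Implicit Arguments. Unset Strict Implicit. Unset Printing Implicit Defensive.

(* Let P f = collisions f = sum_y |f^-1 y|^2 = n deg f and b y = |f^-1 y|.
   The fibres of g \o f are unions of fibres of f, so by 2 b b' <= b^2 + b'^2
   P (g \o f) = sum_(g y = g y') b y * b y' <= sum_y b y^2 |g^-1 (g y)|,
   which is at most P f * sqrt (P g).  Iterating,
   P (f^k)^(2^(k-1)) <= P f^(2^k-1), and with deg f >= 1 this is the upper bound.
   For the lower bound let m = 2^k and q^m <= n < (q+1)^m, and cut
   [0, q^(m-1)) into layers [q^(m-2^(k-j+1)), q^(m-2^(k-j))), j = 1..k.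
   Dividing layer j by q^(2^(k-j)) maps it into layer j-1 (layer 1 to 0),
   with fibres of size at most q^(2^(k-j)); all points >= q^(m-1) are fixed.
   Then deg f <= k+1 while f^k sends q^(m-1) points to 0, so
   deg f^k >= q^(2m-2)/n, which is (1+o(1)) n^(1-2/m). *)

Section Collisions.
Variable T : finType.
Implicit Types f g : T -> T.

Definition fibre f y := [set x | f x == y].

Definition collisions f := \sum_x #|fibre f (f x)|.

Lemma card_fibre f y : #|fibre f y| = \sum_x (f x == y).
Proof. by rewrite -sum1_card big_mkcond; apply: eq_bigr => x _; rewrite inE; case: eqP. Qed.

Lemma sum_comp_fibre f (F : T -> nat) :
  \sum_x F (f x) = \sum_y #|fibre f y| * F y.
Proof.
rewrite (partition_big f xpredT) //; apply: eq_bigr => y _.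
rewrite card_fibre big_distrl /= big_mkcond; apply: eq_bigr => x _.
by case: eqP => [->|]; rewrite ?mul1n.
Qed.

Lemma eq_collisions f g : f =1 g -> collisions f = collisions g.
Proof. by move=> fg; apply: eq_bigr => x _; apply: eq_card => y; rewrite !inE !fg. Qed.

Lemma collisionsE f : collisions f = \sum_y #|fibre f y| ^ 2.
Proof.
rewrite /collisions (sum_comp_fibre f (fun y => #|fibre f y|)).
by apply: eq_bigr => y _; rewrite mulnn.
Qed.

Lemma card_leq_collisions f : #|T| <= collisions f.
Proof.
rewrite -sum1_card; apply: leq_sum => x _.
by rewrite card_gt0; apply/set0Pn; exists x; rewrite inE.
Qed.

Lemma card_fibre_sqr_leq f y : #|fibre f y| ^ 2 <= collisions f.
Proof. by rewrite collisionsE (bigD1 y) //= leq_addr. Qed.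

Lemma leq_sum_mul_sym (r : rel T) (u : T -> nat) : symmetric r ->
  \sum_i \sum_j u i * u j * r i j <= \sum_i \sum_j u i ^ 2 * r i j.
Proof.
move=> r_sym; rewrite -(leq_pmul2l (isT : 0 < 2)).
have swap : \sum_i \sum_j u j ^ 2 * r i j = \sum_i \sum_j u i ^ 2 * r i j.
  by rewrite exchange_big; apply: eq_bigr => i _; apply: eq_bigr => j _; rewrite r_sym.
have <- : \sum_i \sum_j (u i ^ 2 + u j ^ 2) * r i j = 2 * \sum_i \sum_j u i ^ 2 * r i j.
  rewrite mul2n -addnn -{2}swap -big_split; apply: eq_bigr => i _.
  by rewrite -big_split; apply: eq_bigr => j _; rewrite mulnDl.
rewrite big_distrr; apply: leq_sum => i _; rewrite big_distrr; apply: leq_sum => j _ /=.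
by case: (r i j); rewrite ?muln0 ?muln1 //; exact: (nat_Cauchy _ _).1.
Qed.

Lemma collisions_comp f g :
  collisions (g \o f) ^ 2 <= collisions f ^ 2 * collisions g.
Proof.
pose b y := #|fibre f y|; pose a y := #|fibre g (g y)|.
have expand : collisions (g \o f) = \sum_y \sum_y' b y * b y' * (g y == g y').
  rewrite /collisions (sum_comp_fibre f (fun y => #|fibre (g \o f) (g y)|)).
  apply: eq_bigr => y _; rewrite (card_fibre (g \o f)) /=.
  rewrite (sum_comp_fibre f (fun y' => nat_of_bool (g y' == g y))) big_distrr /=.
  by apply: eq_bigr => y' _; rewrite mulnA eq_sym.
have mean : collisions (g \o f) <= \sum_y b y ^ 2 * a y.
  have g_sym : symmetric (fun y y' => g y == g y') by move=> y y'; apply: eq_sym.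
  rewrite expand; apply: leq_trans (leq_sum_mul_sym b g_sym) _.
  apply: eq_leq; apply: eq_bigr => y _; rewrite /a card_fibre big_distrr.
  by apply: eq_bigr => y' _ /=; rewrite eq_sym.
have le_max : \sum_y b y ^ 2 * a y <= collisions f * \max_y a y.
  by rewrite collisionsE big_distrl; apply: leq_sum => y _; rewrite leq_mul2l leq_bigmax orbT.
have max_sqr : (\max_y a y) ^ 2 <= collisions g.
  have [T0 | T_gt0] := posnP #|T|.
    by rewrite big_pred0 // => y; have := card0_eq T0 y.
  by have [y ->] := bigop.eq_bigmax a T_gt0; apply: card_fibre_sqr_leq.
apply: (@leq_trans ((collisions f * \max_y a y) ^ 2)); first by rewrite leq_sqr (leq_trans mean).
by rewrite expnMn leq_mul2l max_sqr orbT.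
Qed.

Lemma collisions_iter f k :
  collisions (iter k.+1 f) ^ (2 ^ k) <= collisions f ^ (2 ^ k.+1 - 1).
Proof.
elim: k => [|k IHk]; first by rewrite expn1.
have -> : collisions (iter k.+2 f) = collisions (iter k.+1 f \o f).
  by apply: eq_collisions => x; rewrite iterSr.
have step : collisions (iter k.+1 f \o f) ^ 2 ^ k.+1
            <= (collisions f ^ 2 * collisions (iter k.+1 f)) ^ 2 ^ k.
  by rewrite expnS expnM leq_exp2r ?expn_gt0 // collisions_comp.
apply: leq_trans step _.
have -> : (2 ^ k.+2 - 1 = 2 * 2 ^ k + (2 ^ k.+1 - 1))%N.
  by rewrite !expnS; have := expn_gt0 2 k; lia.
by rewrite expnMn -expnM expnD leq_mul2l IHk orbT.
Qed.

End Collisions.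

Lemma card_divn_eq_leq n s c : 0 < s -> #|[set y : 'I_n | y %/ s == c]| <= s.
Proof.
move=> s_gt0; rewrite -[s in _ <= s]card_ord.
apply: (leq_card_in (fun y : 'I_n => Ordinal (ltn_pmod y s_gt0))) => y z.
rewrite !inE => /eqP y_div /eqP z_div /(congr1 val) /= eq_mod.
by apply: val_inj; rewrite /= (divn_eq y s) (divn_eq z s) y_div z_div eq_mod.
Qed.

Lemma card_ord_lt n b : b <= n -> #|[set i : 'I_n | i < b]| = b.
Proof.
move=> le_bn; rewrite -sum1dep_card.
have := @big_ord_widen_cond _ 0 addn _ _ xpredT (fun=> 1) le_bn; rewrite /= => <-.
by rewrite sum1_card card_ord.
Qed.

Lemma ex_floor_root m n : 0 < m -> exists q, q ^ m <= n < q.+1 ^ m.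
Proof.
move=> m_gt0; elim: n => [|n [q /andP [le_qn lt_nq]]]; first by exists 0; rewrite exp0n // exp1n.
have [le_q1n | lt_nq1] := leqP (q.+1 ^ m) n.+1; last by exists q; rewrite lt_nq1 (leqW le_qn).
by exists q.+1; rewrite le_q1n (leq_ltn_trans lt_nq) // ltn_exp2r.
Qed.

Lemma subn_expS_leq q J : q.+1 ^ J - q ^ J <= J * q.+1 ^ J.-1.
Proof.
rewrite subn_exp subSnn mul1n -[J in J * _]card_ord -sum_nat_const.
apply: leq_sum => i _; have le_iJ : i <= J.-1 by have := ltn_ord i; lia.
have le_exp : q ^ i <= q.+1 ^ i by case: (nat_of_ord i) => // i'; rewrite leq_exp2r.
by rewrite -[in X in _ <= _ ^ X](subnK le_iJ) expnD leq_mul2l le_exp orbT.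
Qed.

Section Layers.
Variables k q : nat.
Hypotheses (k_gt0 : 0 < k) (q_gt0 : 0 < q).

Definition width j := q ^ 2 ^ (k - j).
Definition threshold j := q ^ (2 ^ k - 2 ^ (k - j)).
(* Layer 1 is [0, threshold 1): the [maxn 1] puts 0 there rather than in a layer 0. *)
Definition level x := maxn 1 (\max_(i < k | threshold i <= x) i.+1).
Definition layer_map x := if x < threshold k then x %/ width (level x) else x.

Lemma width_gt0 j : 0 < width j.
Proof. by rewrite expn_gt0 q_gt0. Qed.

Lemma threshold0 : threshold 0 = 1.
Proof. by rewrite /threshold subn0 subnn. Qed.

Lemma leq_exp2_sub i : 2 ^ (k - i) <= 2 ^ k.
Proof. by rewrite leq_pexp2l // leq_subr. Qed.

Lemma leq_threshold i j : i <= j -> threshold i <= threshold j.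
Proof.
move=> le_ij; rewrite leq_pexp2l //.
have : 2 ^ (k - j) <= 2 ^ (k - i) by rewrite leq_pexp2l //; lia.
have := leq_exp2_sub i; lia.
Qed.

Lemma leq_width i j : i <= j -> width j <= width i.
Proof. by move=> le_ij; rewrite !leq_pexp2l //; lia. Qed.

Lemma threshold_mul_width j : threshold j * width j = q ^ 2 ^ k.
Proof. by rewrite -expnD subnK // leq_exp2_sub. Qed.

Lemma thresholdS j : j < k -> threshold j.+1 = threshold j * width j.+1.
Proof.
move=> lt_jk; rewrite -expnD; congr (q ^ _).
have := leq_exp2_sub j; have -> : k - j = (k - j.+1).+1 by lia.
rewrite expnS; lia.
Qed.

Lemma level_gt0 x : 0 < level x.
Proof. exact: leq_maxl. Qed.

Lemma level_leq_k x : level x <= k.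
Proof. by rewrite geq_max k_gt0; apply/bigmax_leqP => i _. Qed.

Lemma level_leq j x : 0 < j < k -> (level x <= j) = (x < threshold j).
Proof.
case/andP=> j_gt0 lt_jk; rewrite geq_max j_gt0 /=.
apply/bigmax_leqP/idP => [le_j | lt_x i le_x].
  by rewrite ltnNge; apply/negP => /(le_j (Ordinal lt_jk)); rewrite ltnn.
by rewrite ltnNge; apply/negP => le_ji; have := leq_threshold le_ji; lia.
Qed.

Lemma lt_threshold_level x : x < threshold k -> x < threshold (level x).
Proof.
move=> lt_x; have := level_leq_k x; rewrite leq_eqVlt => /orP [/eqP -> //|lt_k].
by rewrite -level_leq // level_gt0.
Qed.

Lemma threshold_level_leq x : 1 < level x -> threshold (level x).-1 <= x.
Proof.
move=> lvl_gt1; rewrite leqNgt -level_leq; last by have := level_leq_k x; lia.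
by rewrite -ltnNge prednK // level_gt0.
Qed.

Lemma layer_map_leq x : layer_map x <= x.
Proof. by rewrite /layer_map; case: ifP => // _; apply: leq_div. Qed.

Lemma layer_map_lt x : x < threshold k -> layer_map x < threshold (level x).-1.
Proof.
move=> lt_x; rewrite /layer_map lt_x ltn_divLR ?width_gt0 //.
have lvl_gt0 := level_gt0 x; have lvl_le := level_leq_k x.
by rewrite -[in width _](prednK lvl_gt0) -thresholdS ?prednK ?lt_threshold_level //; lia.
Qed.

Lemma layer_map_ge x : x < threshold k -> 1 < level x -> threshold (level x).-2 <= layer_map x.
Proof.
move=> lt_x lvl_gt1; rewrite /layer_map lt_x leq_divRL ?width_gt0 //.
apply: leq_trans (threshold_level_leq lvl_gt1).
have lvl_le := level_leq_k x.
have -> : (level x).-1 = (level x).-2.+1 by lia.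
by rewrite thresholdS ?leq_mul2l ?leq_width ?orbT //; lia.
Qed.

Lemma iter_layer_map j x : j <= k -> x < threshold j -> iter j layer_map x = 0.
Proof.
elim: j x => [x _|j IHj x le_jk lt_x]; first by rewrite threshold0; case: x.
have lt_xk : x < threshold k by apply: leq_trans lt_x (leq_threshold le_jk).
have lvl_le : level x <= j.+1.
  have [lt_jk|->] : j.+1 < k \/ j.+1 = k by lia.
    by rewrite level_leq.
  exact: level_leq_k.
rewrite iterSr IHj ?(ltnW le_jk) //.
by apply: leq_trans (layer_map_lt lt_xk) (leq_threshold _); lia.
Qed.

Lemma layer_map_fixed x : threshold k <= x -> layer_map x = x.
Proof. by rewrite /layer_map ltnNge => ->. Qed.

Lemma layer_map_lt_level x y : x < threshold k -> y < threshold k ->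
  level y < level x -> layer_map y < layer_map x.
Proof.
move=> lt_x lt_y lt_lvl; have lvl_gt0 := level_gt0 y.
by apply: leq_trans (layer_map_lt lt_y) (leq_trans (leq_threshold _) (layer_map_ge lt_x _)); lia.
Qed.

Lemma eq_layer_map_fixed x y : threshold k <= x -> layer_map y = layer_map x -> y = x.
Proof.
move=> le_x; rewrite (layer_map_fixed le_x).
case: (ltnP y (threshold k)) => [lt_y|le_y]; last by rewrite layer_map_fixed.
by have := layer_map_leq y; lia.
Qed.

Lemma eq_layer_map_div x y : x < threshold k -> layer_map y = layer_map x ->
  y %/ width (level x) = x %/ width (level x).
Proof.
move=> lt_x eq_yx.
have lt_y : y < threshold k.
  rewrite ltnNge; apply/negP => le_y; move: eq_yx; rewrite layer_map_fixed //.
  by have := layer_map_leq x; lia.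
have eq_lvl : level y = level x.
  case: (ltngtP (level y) (level x)) => // lt_lvl.
    by have := layer_map_lt_level lt_x lt_y lt_lvl; lia.
  by have := layer_map_lt_level lt_y lt_x lt_lvl; lia.
by move: eq_yx; rewrite /layer_map lt_x lt_y eq_lvl.
Qed.

Variable n : nat.
Hypothesis q_le_n : q ^ 2 ^ k <= n.

Definition layer_ord (x : 'I_n) : 'I_n :=
  Ordinal (leq_ltn_trans (layer_map_leq x) (ltn_ord x)).

Lemma val_iter_layer_ord j x : val (iter j layer_ord x) = iter j layer_map x.
Proof. by elim: j => //= j ->. Qed.

Lemma threshold_leq_n j : threshold j <= n.
Proof.
apply: leq_trans q_le_n; rewrite -(threshold_mul_width j) leq_pmulr //.
exact: width_gt0.
Qed.

Lemma collisions_layer_ord : collisions layer_ord <= k * q ^ 2 ^ k + n.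
Proof.
(* [S x] dominates the fibre of [x]; summed over [x], layer [j] contributes
   [threshold j * width j = q ^ 2 ^ k]. *)
pose S (x : nat) := \sum_(j < k | x < threshold j.+1) width j.+1.
have fibre_le x : #|fibre layer_ord (layer_ord x)| <= S x + 1.
  have [lt_x | le_x] := ltnP x (threshold k).
    set w := width (level x).
    apply: leq_trans (_ : #|[set y : 'I_n | y %/ w == x %/ w]| <= _).
      apply/subset_leq_card/subsetP => y; rewrite !inE => /eqP /(congr1 val) /= eq_yx.
      by rewrite (eq_layer_map_div lt_x eq_yx).
    apply: leq_trans (card_divn_eq_leq _ _ (width_gt0 _)) (leq_trans _ (leq_addr _ _)).
    have lvl_gt0 := level_gt0 x; have lvl_le := level_leq_k x.
    have lvl_lt : (level x).-1 < k by lia.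
    rewrite /S (bigD1 (Ordinal lvl_lt)) /= prednK ?lt_threshold_level //.
    exact: leq_addr.
  apply: leq_trans (leq_addl _ _); rewrite -(cards1 x).
  apply/subset_leq_card/subsetP => y; rewrite !inE => /eqP /(congr1 val) /= eq_yx.
  exact/eqP/val_inj/(eq_layer_map_fixed le_x).
apply: (@leq_trans (\sum_(x : 'I_n) (S x + 1))); first by apply: leq_sum => x _.
rewrite big_split /= sum1_card card_ord leq_add2r.
rewrite (exchange_big_dep xpredT) //= (eq_bigr (fun=> q ^ 2 ^ k)) ?sum_nat_const ?card_ord //.
by move=> j _; rewrite sum_nat_cond_const card_ord_lt ?threshold_leq_n ?threshold_mul_width.
Qed.

Lemma collisions_iter_layer_ord : threshold k ^ 2 <= collisions (iter k layer_ord).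
Proof.
set A := [set y : 'I_n | y < threshold k].
apply: (@leq_trans (\sum_(x in A) #|A|)).
  by rewrite sum_nat_const card_ord_lt ?threshold_leq_n // mulnn.
rewrite /collisions [X in _ <= X](bigID (mem A)) /=; apply: leq_trans (leq_addr _ _).
apply: leq_sum => x x_in_A; apply/subset_leq_card/subsetP => y y_in_A.
move: x_in_A y_in_A; rewrite !inE => lt_x lt_y.
by apply/eqP/val_inj; rewrite !val_iter_layer_ord !iter_layer_map.
Qed.

End Layers.

Section Ratio.
Variable R : realType.
Local Open Scope ring_scope.

Lemma fdegE (T : finType) (f : T -> T) : fdeg R f = (collisions f)%:R / #|T|%:R.
Proof. by rewrite /fdeg /collisions natr_sum. Qed.

Lemma fdeg_ge1 (T : finType) (f : T -> T) : (0 < #|T|)%N -> 1 <= fdeg R f.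
Proof.
by move=> T_gt0; rewrite fdegE ler_pdivlMr ?ltr0n // mul1r ler_nat card_leq_collisions.
Qed.

Lemma powR_natdiv_exprn (x : R) (s t : nat) :
  0 <= x -> (0 < t)%N -> powR x (s%:R / t%:R) ^+ t = x ^+ s.
Proof.
move=> x_ge0 t_gt0.
by rewrite -powR_mulrn ?powR_ge0 // -powRrM divfK ?pnatr_eq0 -?lt0n // powR_mulrn.
Qed.

Lemma expoE k : expo R k = (2 ^ k.-1).-1%:R / (2 ^ k.-1)%:R.
Proof.
have t_gt0 : (0 < 2 ^ k.-1)%N by rewrite expn_gt0.
rewrite /expo -natrX -(prednK t_gt0) -natr1.
by field; rewrite natr1 pnatr_eq0.
Qed.

Lemma fratio_le_expo (T : finType) k (gamma : R) (f : T -> T) :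
  (0 < #|T|)%N -> (0 < k)%N -> 2 - (2 ^+ k.-1)^-1 <= gamma ->
  fratio k gamma f <= powR #|T|%:R (expo R k).
Proof.
case: k => // k T_gt0 _ /=; set t := (2 ^ k)%N => gamma_ge.
have t_gt0 : (0 < t)%N by rewrite expn_gt0.
have n_gt0 : (0 : R) < #|T|%:R by rewrite ltr0n.
have D1_ge1 := fdeg_ge1 f T_gt0.
have Dk_ge0 : 0 <= fdeg R (iter k.+1 f) by rewrite fdegE divr_ge0.
have gamma0E : 2 - (2 ^+ k)^-1 = (2 * t).-1%:R / t%:R :> R.
  rewrite -natrX -/t -(prednK t_gt0) mulnS addSn /= natrD -natr1.
  by field; rewrite nat1r pnatr_eq0.
apply: (@le_trans _ _ (fdeg R (iter k.+1 f) / powR (fdeg R f) (2 - (2 ^+ k)^-1))).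
  rewrite ler_wpM2l // lef_pV2 ?posrE ?powR_gt0 ?(lt_le_trans ltr01) //.
  exact: ler_powR.
rewrite ler_pdivrMr ?powR_gt0 ?(lt_le_trans ltr01) //.
(* Raised to the power [t], the claim becomes [collisions_iter f k]. *)
rewrite -(ler_pXn2r t_gt0) ?nnegrE ?Dk_ge0 ?mulr_ge0 ?powR_ge0 //.
rewrite [X in _ <= X]exprMn expoE gamma0E /= -/t.
rewrite !powR_natdiv_exprn ?ler0n ?(le_trans ler01) //.
have tE : (2 ^ k.+1 - 1 = t.-1 + t)%N by rewrite expnS -/t; lia.
have key := collisions_iter f k; rewrite -/t tE in key.
have -> : (2 * t).-1 = (t.-1 + t)%N by lia.
rewrite !fdegE !expr_div_n [X in _ <= X]mulrCA [#|T|%:R ^+ (_ + _)]exprD invfM.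
rewrite mulVKf ?expf_neq0 ?gt_eqF //.
by rewrite ler_pM2r ?invr_gt0 ?exprn_gt0 // -!natrX ler_nat.
Qed.

Lemma eq_fratio (T : finType) k (gamma : R) (f g : T -> T) :
  f =1 g -> fratio k gamma f = fratio k gamma g.
Proof.
by move=> fg; rewrite /fratio !fdegE (eq_collisions fg) (eq_collisions (eq_iter fg k)).
Qed.

Lemma fratio_le_maxratio n k (gamma : R) (f : 'I_n -> 'I_n) :
  fratio k gamma f <= maxratio n k gamma.
Proof.
rewrite (@eq_fratio _ _ _ f [ffun x => f x]) => [|x]; last by rewrite ffunE.
exact: le_bigmax.
Qed.

Lemma maxratio_le n k (gamma B : R) : 0 <= B ->
  (forall f : 'I_n -> 'I_n, fratio k gamma f <= B) -> maxratio n k gamma <= B.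
Proof. by move=> B_ge0 le_B; apply: bigmax_le => // f _; apply: le_B. Qed.

Lemma fratio_ge (T : finType) k (gamma c : R) (f : T -> T) :
  (0 < #|T|)%N -> 0 <= gamma -> fdeg R f <= c ->
  fdeg R (iter k f) / powR c gamma <= fratio k gamma f.
Proof.
move=> T_gt0 gamma_ge0 le_c; have D1_gt0 := lt_le_trans ltr01 (fdeg_ge1 f T_gt0).
have c_gt0 := lt_le_trans D1_gt0 le_c.
have Dk_ge0 : 0 <= fdeg R (iter k f) by rewrite fdegE divr_ge0.
rewrite ler_wpM2l // lef_pV2 ?posrE ?powR_gt0 //.
by apply: ge0_ler_powR; rewrite // nnegrE ltW.
Qed.

Lemma powR_expo_le (x y : R) k : (0 < k)%N -> 0 <= x -> 0 <= y ->
  x <= y ^+ (2 ^ k) -> powR x (expo R k) <= y ^+ (2 ^ k - 2).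
Proof.
case: k => // k _ x_ge0 y_ge0 le_xy; set t := (2 ^ k)%N.
have t_gt0 : (0 < t)%N by rewrite expn_gt0.
rewrite -(ler_pXn2r t_gt0) ?nnegrE ?powR_ge0 ?exprn_ge0 // expoE /= -/t.
rewrite powR_natdiv_exprn // -exprM.
have -> : ((2 ^ k.+1 - 2) * t = 2 ^ k.+1 * t.-1)%N by rewrite expnS -/t; lia.
by rewrite exprM; apply: lerXn2r; rewrite ?nnegrE ?exprn_ge0.
Qed.

Lemma ler_1B_expS (eps : R) q J : J%:R <= eps * q.+1%:R ->
  (1 - eps) * (q.+1 ^ J)%:R <= (q ^ J)%:R.
Proof.
case: J => [|J le_J]; first by rewrite !expn0 mulr1 pmulr_lge0 ?ltr0n //; lra.
have := subn_expS_leq q J.+1; rewrite leq_subLR -(ler_nat R) natrD natrM /=.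
rewrite expnS natrM; move: le_J (ler0n R (q.+1 ^ J)).
move: (J.+1%:R) (q.+1%:R) ((q.+1 ^ J)%:R) ((q ^ J.+1)%:R) => j c a b; nra.
Qed.

Lemma expo_lower_bound (eps : R) k q n : (0 < k)%N -> (0 < n)%N ->
  (2 ^ k.+1)%:R <= eps * q.+1%:R -> (n <= q.+1 ^ 2 ^ k)%N ->
  (1 - eps) * powR n%:R (expo R k) <= ((q ^ (2 ^ k - 1)) ^ 2)%:R / n%:R.
Proof.
move=> k_gt0 n_gt0 le_eps le_n; have n_pos : (0 : R) < n%:R by rewrite ltr0n.
have [eps_ge1|eps_lt1] := lerP 1 eps.
  by apply: le_trans (_ : 0 <= _); rewrite ?divr_ge0 // mulr_le0_ge0 ?powR_ge0 ?subr_le0.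
set m := (2 ^ k)%N; have m_ge2 : (2 <= m)%N by rewrite -[2%N]/(2 ^ 1)%N leq_pexp2l.
rewrite ler_pdivlMr // -mulrA.
apply: le_trans (_ : (1 - eps) * (q.+1 ^ (m - 2 + m))%:R <= _); last first.
  rewrite -expnM; have -> : ((m - 1) * 2 = m - 2 + m)%N by lia.
  apply: ler_1B_expS; apply: le_trans le_eps; rewrite ler_nat expnS; lia.
have eps_le1 : 0 <= 1 - eps by rewrite subr_ge0 ltW.
rewrite ler_wpM2l // expnD natrM ler_pM ?powR_ge0 ?ler_nat // natrX.
by rewrite powR_expo_le // -natrX ler_nat.
Qed.

Lemma maxratio_le_expo n k (gamma : R) :
  (0 < n)%N -> (0 < k)%N -> 2 - (2 ^+ k.-1)^-1 <= gamma ->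
  maxratio n k gamma <= powR n%:R (expo R k).
Proof.
move=> n_gt0 k_gt0 gamma_ge; apply: maxratio_le => [|f]; first exact: powR_ge0.
by rewrite -[n in powR n%:R _]card_ord fratio_le_expo ?card_ord.
Qed.

Lemma maxratio_ge_layered (eps gamma : R) k q n :
  (0 < k)%N -> (0 < q)%N -> 0 <= gamma -> (2 ^ k.+1)%:R <= eps * q.+1%:R ->
  (q ^ 2 ^ k <= n < q.+1 ^ 2 ^ k)%N ->
  (1 - eps) / powR k.+1%:R gamma * powR n%:R (expo R k) <= maxratio n k gamma.
Proof.
move=> k_gt0 q_gt0 gamma_ge0 le_eps /andP [le_qn lt_nq].
have n_gt0 : (0 < n)%N by apply: leq_trans le_qn; rewrite expn_gt0 q_gt0.
pose f := @layer_ord k q n.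
have deg_le : fdeg R f <= k.+1%:R.
  rewrite fdegE card_ord ler_pdivrMr ?ltr0n // -natrM ler_nat mulSn addnC.
  apply: leq_trans (collisions_layer_ord k_gt0 q_gt0 le_qn) _.
  by rewrite leq_add2r leq_mul2l le_qn orbT.
apply: le_trans (fratio_le_maxratio k gamma f).
apply: le_trans (fratio_ge k _ _ deg_le); rewrite ?card_ord //.
rewrite mulrAC ler_pM2r ?invr_gt0 ?powR_gt0 ?ltr0n //.
apply: le_trans (expo_lower_bound k_gt0 n_gt0 le_eps (ltnW lt_nq)) _.
rewrite fdegE card_ord ler_pM2r ?invr_gt0 ?ltr0n // ler_nat.
by have := collisions_iter_layer_ord k_gt0 q_gt0 le_qn; rewrite /threshold subnn expn0.
Qed.

End Ratio.

Local Open Scope ring_scope.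

Theorem mainTheorem1 (R : realType) (k : nat) (gamma : R) :
  (2 <= k)%N -> 0 <= gamma ->
  (forall eps : R, 0 < eps -> exists N : nat, forall n : nat, (N <= n)%N ->
     (1 - eps) / powR (k.+1)%:R gamma * powR n%:R (expo R k)
       <= maxratio n k gamma)
  /\
  (2 - (2 ^+ k.-1)^-1 <= gamma ->
     forall n : nat, (1 <= n)%N -> maxratio n k gamma <= powR n%:R (expo R k)).
Proof.
move=> k_ge2 gamma_ge0; have k_gt0 : (0 < k)%N by lia.
split=> [eps eps_gt0|gamma_ge n n_gt0]; last exact: maxratio_le_expo.
pose Q := Num.Def.archi_bound ((2 ^ k.+1)%:R / eps : R).
have eps_ratio_ge0 : 0 <= (2 ^ k.+1)%:R / eps :> R by rewrite divr_ge0 // ltW.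
have archiQ : (2 ^ k.+1)%:R / eps < Q%:R by apply: archi_boundP.
have Q_gt0 : (0 < Q)%N by rewrite -(ltr0n R) (le_lt_trans eps_ratio_ge0).
exists (Q ^ 2 ^ k)%N => n le_n.
have [q q_root] := ex_floor_root n (expn_gt0 2 k); have /andP [_ lt_nq] := q_root.
have le_Qq : (Q <= q)%N.
  by rewrite -ltnS -(ltn_exp2r _ _ (expn_gt0 2 k)) (leq_ltn_trans le_n).
apply: (maxratio_ge_layered k_gt0 (leq_trans Q_gt0 le_Qq) gamma_ge0 _ q_root).
by rewrite mulrC -ler_pdivrMr // ltW // (lt_le_trans archiQ) // ler_nat leqW.
Qed.
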